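(* Let $r_1,r_2>0$ and let $\gamma_1,\gamma_2$ be two disjoint geodesics in $\mathbb{H}^2$, and let $\gamma$ be the set of points $q\in\mathbb{H}^2$ with $r_1\sinh d(q,\gamma_1)=r_2\sinh d(q,\gamma_2)$ (this set is a geodesic). Suppose $\mathbb{H}^2$ is isometrically identified with the Poincaré unit disk $\mathbb{D}$ so that $\gamma$ is a diameter of $\mathbb{D}$. Then the Euclidean circles containing $\gamma_1$ and $\gamma_2$ have radii in ratio $r_1:r_2$, and the inversive distance between these two Euclidean circles equals $\cosh d_{\mathbb{H}}(\gamma_1,\gamma_2)$.
   Context: The inversive distance of two Euclidean circles with radii $\rho_1,\rho_2$ whose centers are at distance $l$ is $(l^2-\rho_1^2-\rho_2^2)/(2\rho_1\rho_2)$. *)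

From HB Require Import structures.
From mathcomp Require Import all_boot all_order all_algebra.
From mathcomp Require Import all_classical all_reals all_analysis.
Set Implicit Arguments. Unset Strict Implicit. Unset Printing Implicit Defensive.
Import Order.TTheory GRing.Theory Num.Theory.
Local Open Scope classical_set_scope.
Local Open Scope ring_scope.

Section Defs.
Variable R : realType.
Notation pt := (R * R)%type.

Definition cosh (x : R) : R := (expR x + expR (- x)) / 2.
Definition sinh (x : R) : R := (expR x - expR (- x)) / 2.
Definition arcosh (x : R) : R := ln (x + Num.sqrt (x ^+ 2 - 1)).

Definition sqn (p : pt) : R := p.1 ^+ 2 + p.2 ^+ 2.
Definition sqdist (p q : pt) : R := (p.1 - q.1) ^+ 2 + (p.2 - q.2) ^+ 2.

Definition disk : set pt := [set p | sqn p < 1].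

Definition dH (p q : pt) : R :=
  arcosh (1 + 2 * sqdist p q / ((1 - sqn p) * (1 - sqn q))).

Definition dH_pt_set (q : pt) (A : set pt) : R := inf [set dH q p | p in A].
Definition dH_set (A B : set pt) : R :=
  inf [set dH pq.1 pq.2 | pq in A `*` B].

Definition diameter (G : set pt) : Prop :=
  exists u : pt, u != (0, 0) /\
    G = [set p | disk p /\ p.1 * u.2 - p.2 * u.1 = 0].

(* complete geodesic lines of the Poincare disk: diameters and the
   intersections with the disk of Euclidean circles orthogonal to the unit
   circle (center c, radius rho with |c|^2 = 1 + rho^2) *)
Definition geodesic (G : set pt) : Prop :=
  diameter G \/
  exists (c : pt) (rho : R), 0 < rho /\ sqn c = 1 + rho ^+ 2 /\
    G = [set p | disk p /\ sqdist p c = rho ^+ 2].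

Definition circle (c : pt) (rho : R) : set pt := [set p | sqdist p c = rho ^+ 2].

Definition inversive_distance (c1 : pt) (rho1 : R) (c2 : pt) (rho2 : R) : R :=
  (sqdist c1 c2 - rho1 ^+ 2 - rho2 ^+ 2) / (2 * rho1 * rho2).
End Defs.

(* Work in the hyperboloid model: hlift maps the disk isometrically onto the upper sheet of
   mdot U U = -1 in Minkowski space, with cosh (dH p q) = - mdot (hlift p) (hlift q).  The
   geodesic on a circle (c, rho) orthogonal to the unit circle is the set of points orthogonal
   to N = (1, c), where mdot N N = rho ^+ 2, and Gram-determinant inequalities give
   sinh d(q, g) = |mdot Q N| / rho and cosh d(g1, g2) = |mdot N1 N2| / (rho1 * rho2).
   The origin lies on the diameter, so r1 sinh d(0, g1) = r2 sinh d(0, g2); with disjointness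
   this rules out diameters among g1, g2 and gives r1 / rho1 = r2 / rho2.  The inversive distance is
   - mdot N1 N2 / (rho1 * rho2), and its sign is right because the bisector, which is the
   set |mdot Q N1| = |mdot Q N2|, contains the geodesic mdot Q (N1 + N2) = 0 as soon as the
   midpoint of c1 and c2 lies outside the closed unit disk, and that geodesic is no diameter. *)

From HB Require Import structures.
From mathcomp Require Import all_boot all_order all_algebra.
From mathcomp Require Import all_classical all_reals all_analysis.
From mathcomp.algebra_tactics Require Import ring lra.
Set Implicit Arguments.
Unset Strict Implicit.
Unset Printing Implicit Defensive.

Import Order.TTheory GRing.Theory Num.Theory.
Local Open Scope classical_set_scope.
Local Open Scope ring_scope.

Section HyperbolicFunctions.
Variable R : realType.
Implicit Types (s t x y : R).

Let arcosh_arg_ge1 x : 1 <= x -> 1 <= x + Num.sqrt (x ^+ 2 - 1).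
Proof. by move=> x1; have := sqrtr_ge0 (x ^+ 2 - 1); lra. Qed.

Lemma arcosh_ge0 x : 1 <= x -> 0 <= arcosh x.
Proof. by move=> x1; apply/ln_ge0/arcosh_arg_ge1. Qed.

Lemma expR_arcosh x : 1 <= x -> expR (arcosh x) = x + Num.sqrt (x ^+ 2 - 1).
Proof. by move=> x1; rewrite lnK // posrE; have := arcosh_arg_ge1 x1; lra. Qed.

Lemma expRN_arcosh x : 1 <= x -> expR (- arcosh x) = x - Num.sqrt (x ^+ 2 - 1).
Proof.
move=> x1; rewrite expRN expR_arcosh //.
have x21 : 0 <= x ^+ 2 - 1 by nra.
have := sqrtr_ge0 (x ^+ 2 - 1); have := sqr_sqrtr x21.
set r := Num.sqrt _ => r2 r0.
apply: (@mulIf _ (x + r)); first by apply/eqP; lra.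
by rewrite mulVf; [nra | apply/eqP; lra].
Qed.

Lemma cosh_arcosh x : 1 <= x -> cosh (arcosh x) = x.
Proof. by move=> x1; rewrite /cosh expR_arcosh // expRN_arcosh //; field. Qed.

Lemma sinh_arcosh x : 1 <= x -> sinh (arcosh x) = Num.sqrt (x ^+ 2 - 1).
Proof. by move=> x1; rewrite /sinh expR_arcosh // expRN_arcosh //; field. Qed.

Lemma sinh0 : sinh 0 = 0 :> R.
Proof. by rewrite /sinh oppr0 subrr mul0r. Qed.

Lemma arcosh_cosh t : 0 <= t -> arcosh (cosh t) = t.
Proof.
move=> t0; have sinh_ge0 : 0 <= sinh t.
  by rewrite /sinh divr_ge0 // subr_ge0 ler_expR; lra.
have e1 : expR t * expR (- t) = 1 by rewrite -expRD subrr expR0.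
rewrite /arcosh.
have -> : cosh t ^+ 2 - 1 = sinh t ^+ 2 by rewrite /cosh /sinh; nra.
rewrite sqrtr_sqr ger0_norm // -[X in _ = X]expRK; congr ln.
by rewrite /cosh /sinh; field.
Qed.

Lemma lt_cosh s t : 0 <= s -> s < t -> cosh s < cosh t.
Proof.
move=> s0 st; rewrite -subr_gt0.
have -> : cosh t - cosh s = (expR t - expR s) * (1 - expR (- (s + t))) / 2.
  by rewrite /cosh !expRN expRD; field; rewrite !expR_eq0.
rewrite divr_gt0 // mulr_gt0 // subr_gt0 ?ltr_expR // -expR0 ltr_expR; lra.
Qed.

Lemma le_arcosh x y : 1 <= x -> x <= y -> arcosh x <= arcosh y.
Proof.
move=> x1 xy; have := arcosh_arg_ge1 x1; have := arcosh_arg_ge1 (le_trans x1 xy).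
move=> y1 x1'; rewrite /arcosh ler_ln ?posrE; [|lra|lra].
by rewrite lerD // ler_sqrt; nra.
Qed.

Lemma inf_arcosh (T : Type) (A : set T) (f : T -> R) (K : R) :
  1 <= K -> (forall a, A a -> K <= f a) ->
  (forall x, K < x -> exists2 a, A a & f a <= x) ->
  inf [set arcosh (f a) | a in A] = arcosh K.
Proof.
move=> K1 f_ge f_near; set S := [set _ | _ in _].
have S_ge : lbound S (arcosh K) by move=> _ [a Aa <-]; apply: le_arcosh; auto.
apply/eqP; rewrite eq_le; apply/andP; split; last first.
  apply: lb_le_inf S_ge; have [a Aa _] := f_near (K + 1) ltac:(lra).
  by exists (arcosh (f a)), a.
apply/ler_addgt0Pr => e e0.
have [|a Aa fa] := f_near (cosh (arcosh K + e)).
  by rewrite -[X in X < _](cosh_arcosh K1) lt_cosh ?arcosh_ge0 //; lra.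
apply: (le_trans (ge_inf (ex_intro _ _ S_ge) (ex_intro2 _ _ a Aa erefl))).
rewrite -[X in _ <= X]arcosh_cosh; last by have := arcosh_ge0 K1; lra.
by apply: le_arcosh fa; apply: le_trans (f_ge a Aa).
Qed.

End HyperbolicFunctions.

Section Minkowski.
Variable R : realType.
Notation pt := (R * R)%type.

Definition vec := (R * pt)%type.

Definition dot (x y : pt) : R := x.1 * y.1 + x.2 * y.2.
Definition mdot (U V : vec) : R := - U.1 * V.1 + dot U.2 V.2.
Definition vcomb (a : R) (U : vec) (b : R) (V : vec) : vec :=
  (a * U.1 + b * V.1, (a * U.2.1 + b * V.2.1, a * U.2.2 + b * V.2.2)).
Definition hyperboloid (U : vec) : Prop := mdot U U = -1 /\ 0 < U.1.

Implicit Types (N U V W Y Z : vec).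

Lemma mdotC U V : mdot U V = mdot V U.
Proof. by rewrite /mdot /dot /=; ring. Qed.

Lemma mdot_combl a U b V W : mdot (vcomb a U b V) W = a * mdot U W + b * mdot V W.
Proof. by rewrite /mdot /dot /=; ring. Qed.

Lemma mdot_combr a U b V W : mdot W (vcomb a U b V) = a * mdot W U + b * mdot W V.
Proof. by rewrite /mdot /dot /=; ring. Qed.

Lemma hyperboloid_mdot_le U V : hyperboloid U -> hyperboloid V -> mdot U V <= -1.
Proof.
move: U V => [u0 [u1 u2]] [v0 [v1 v2]] [/= uu u0_gt0] [/= vv v0_gt0].
move: uu vv; rewrite /mdot /dot /= => uu vv.
have lagrange : (u0 * v0) ^+ 2 - (1 + u1 * v1 + u2 * v2) ^+ 2 =
   (u1 - v1) ^+ 2 + (u2 - v2) ^+ 2 + (u1 * v2 - u2 * v1) ^+ 2.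
  have -> : (u0 * v0) ^+ 2 = u0 ^+ 2 * v0 ^+ 2 by ring.
  have -> : u0 ^+ 2 = 1 + u1 ^+ 2 + u2 ^+ 2 by lra.
  have -> : v0 ^+ 2 = 1 + v1 ^+ 2 + v2 ^+ 2 by lra.
  by ring.
suff : 1 + u1 * v1 + u2 * v2 <= u0 * v0 by lra.
have [le0|gt0] := lerP (1 + u1 * v1 + u2 * v2) 0; first by nra.
rewrite -(ler_pXn2r (n := 2)) ?nnegrE //; [|lra|exact/ltW/mulr_gt0].
by have := sqr_ge0 (u1 - v1); have := sqr_ge0 (u2 - v2); have := sqr_ge0 (u1 * v2 - u2 * v1); lra.
Qed.

Lemma hyperboloid_or_opp U : mdot U U = -1 -> hyperboloid U \/ hyperboloid (vcomb (-1) U 0 U).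
Proof.
move=> uu; rewrite /hyperboloid mdot_combl !mdot_combr uu /=.
have : 1 <= U.1 ^+ 2.
  by move: uu; rewrite /mdot /dot; have := sqr_ge0 U.2.1; have := sqr_ge0 U.2.2; nra.
by have [] := ltrP 0 U.1; [left | right; split; [ring | nra]].
Qed.

Lemma hyperboloid_of_mdot U V : mdot U U = -1 -> hyperboloid V -> mdot U V < 0 ->
  hyperboloid U.
Proof.
move=> uu hV uv; case: (hyperboloid_or_opp uu) => // hNU.
by have := hyperboloid_mdot_le hNU hV; rewrite mdot_combl; lra.
Qed.

(* The Gram matrix of U, V, W is M^T diag(-1, 1, 1) M, so its determinant is -(det M)^2. *)
Definition gram U V W : R :=
  mdot U U * (mdot V V * mdot W W - mdot V W ^+ 2)
  - mdot U V * (mdot U V * mdot W W - mdot V W * mdot U W)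
  + mdot U W * (mdot U V * mdot V W - mdot V V * mdot U W).

Lemma gram_le0 U V W : gram U V W <= 0.
Proof.
set d := U.1 * (V.2.1 * W.2.2 - V.2.2 * W.2.1) - U.2.1 * (V.1 * W.2.2 - V.2.2 * W.1)
  + U.2.2 * (V.1 * W.2.1 - V.2.1 * W.1).
have -> : gram U V W = - d ^+ 2 by rewrite /gram /mdot /dot /d; ring.
by rewrite oppr_le0 sqr_ge0.
Qed.

(* The cosh of the distance from Y to the geodesic orthogonal to N. *)
Definition polar_cosh N Y : R := Num.sqrt (1 + mdot Y N ^+ 2 / mdot N N).

Section Polar.
Variable N : vec.
Hypothesis N_spacelike : 0 < mdot N N.

Lemma sqr_polar_cosh Y : polar_cosh N Y ^+ 2 = 1 + mdot Y N ^+ 2 / mdot N N.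
Proof. by rewrite sqr_sqrtr // addr_ge0 // divr_ge0 ?sqr_ge0 // ltW. Qed.

Lemma polar_cosh_ge1 Y : 1 <= polar_cosh N Y.
Proof.
have := sqr_polar_cosh Y; have := sqrtr_ge0 (1 + mdot Y N ^+ 2 / mdot N N).
have : 0 <= mdot Y N ^+ 2 / mdot N N by rewrite divr_ge0 ?sqr_ge0 // ltW.
rewrite /polar_cosh; nra.
Qed.

Lemma polar_cosh_le Y Z : hyperboloid Y -> hyperboloid Z -> mdot Z N = 0 ->
  polar_cosh N Y <= - mdot Y Z.
Proof.
move=> hY hZ zn; have := hyperboloid_mdot_le hY hZ.
have := gram_le0 Z N Y; rewrite /gram hY.1 hZ.1 zn (mdotC N Y) (mdotC Z Y) => g yz.
rewrite -[X in _ <= X]ger0_norm; last lra.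
rewrite -sqrtr_sqr ler_sqrt ?sqr_ge0 // sqrrN -(ler_pM2r N_spacelike) mulrDl divfK //;
  [lra | exact: lt0r_neq0].
Qed.

Lemma polar_foot Y : hyperboloid Y ->
  exists2 Z, hyperboloid Z /\ mdot Z N = 0 & - mdot Y Z = polar_cosh N Y.
Proof.
move=> hY; set s := polar_cosh N Y; set b := mdot Y N; set nu := mdot N N.
have s2 : s ^+ 2 = 1 + b ^+ 2 / nu := sqr_polar_cosh Y.
have s1 : 1 <= s := polar_cosh_ge1 Y.
have s_neq0 : s != 0 by rewrite gt_eqF //; lra.
have nu_neq0 : nu != 0 := lt0r_neq0 N_spacelike.
set Z := vcomb s^-1 Y (- (b / nu / s)) N.
have yz : mdot Y Z = - s.
  rewrite mdot_combr hY.1 -/b; transitivity (- s ^+ 2 / s); last by field.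
  by rewrite {1}s2; field; apply/andP.
have zz : mdot Z Z = -1.
  rewrite mdot_combl !mdot_combr hY.1 (mdotC N Y) -/b -/nu.
  transitivity (- s ^+ 2 / s ^+ 2); last by rewrite mulNr divff ?expf_neq0.
  by rewrite {1}s2; field; apply/andP.
exists Z; last by rewrite yz opprK.
split; last by rewrite mdot_combl -/b -/nu; field; apply/andP.
by apply: hyperboloid_of_mdot hY _; rewrite // mdotC yz; lra.
Qed.

Lemma polar_cosh_ge N' Y (K : R) : 0 < mdot N' N' -> 0 <= K ->
  K ^+ 2 * (mdot N N * mdot N' N') = mdot N N' ^+ 2 ->
  mdot Y Y = -1 -> mdot Y N' = 0 -> K <= polar_cosh N Y.
Proof.
move=> N'_spacelike K0 KE yy yn'.
have := gram_le0 N' N Y; rewrite /gram yy (mdotC N' Y) (mdotC N Y) (mdotC N' N) yn' => g.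
rewrite -[K]ger0_norm // -sqrtr_sqr ler_sqrt ?sqr_polar_cosh; last first.
  by rewrite addr_ge0 // divr_ge0 ?sqr_ge0 // ltW.
rewrite -(ler_pM2r N_spacelike) -(ler_pM2r N'_spacelike) mulrDl divfK;
  [rewrite -mulrA KE; lra | exact: lt0r_neq0].
Qed.

End Polar.
End Minkowski.

Section PoincareDisk.
Variable R : realType.
Notation pt := (R * R)%type.
Implicit Types (p q : pt) (N U Y Z : vec R).

(* Inverse of the stereographic projection of the hyperboloid from (-1, 0, 0). *)
Definition hlift p : vec R :=
  ((1 + sqn p) / (1 - sqn p), (2 * p.1 / (1 - sqn p), 2 * p.2 / (1 - sqn p))).
Definition hproj U : pt := (U.2.1 / (1 + U.1), U.2.2 / (1 + U.1)).

Definition polar N : set pt := [set p | disk p /\ mdot (hlift p) N = 0].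

Lemma disk_subr_gt0 p : disk p -> 0 < 1 - sqn p.
Proof. by rewrite /disk /=; lra. Qed.

Lemma hlift_hyperboloid p : disk p -> hyperboloid (hlift p).
Proof.
move=> /disk_subr_gt0; rewrite /hyperboloid /mdot /dot /hlift /sqn /= => p_gt0.
split; first by field; apply/eqP; lra.
by rewrite divr_gt0 //; have := sqr_ge0 p.1; have := sqr_ge0 p.2; lra.
Qed.

Lemma hproj_disk U : hyperboloid U -> disk (hproj U).
Proof.
move: U => [u0 [u1 u2]]; rewrite /hyperboloid /mdot /dot /hproj /disk /sqn /=.
move=> [uu u0_gt0]; rewrite !expr_div_n -mulrDl ltr_pdivrMr ?exprn_gt0; nra.
Qed.

Lemma hprojK U : hyperboloid U -> hlift (hproj U) = U.
Proof.
move: U => [u0 [u1 u2]]; rewrite /hyperboloid /mdot /dot /hproj /hlift /sqn /=.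
move=> [uu u0_gt0]; have u0_neq : 1 + u0 != 0 by rewrite gt_eqF //; lra.
have sqn_hproj : (u1 / (1 + u0)) ^+ 2 + (u2 / (1 + u0)) ^+ 2 = (u0 - 1) / (1 + u0).
  rewrite !expr_div_n -mulrDl.
  have -> : u1 ^+ 2 + u2 ^+ 2 = u0 ^+ 2 - 1 by lra.
  by field.
rewrite sqn_hproj; congr (_, (_, _)); field; rewrite u0_neq /=; apply/eqP; lra.
Qed.

Lemma mdot_hlift p a (x : pt) : disk p ->
  mdot (hlift p) (a, x) * (1 - sqn p) = 2 * dot p x - a * (1 + sqn p).
Proof.
move=> /disk_subr_gt0 p_gt0; rewrite /mdot /dot /hlift /=.
by field; apply/eqP; lra.
Qed.

Lemma hlift0 : hlift (0, 0) = (1, (0, 0)).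
Proof. by rewrite /hlift /sqn /= expr0n /= !(addr0, subr0, mulr0, mul0r, divr1). Qed.

Lemma dH_hlift p q : disk p -> disk q -> dH p q = arcosh (- mdot (hlift p) (hlift q)).
Proof.
move=> /disk_subr_gt0 p_gt0 /disk_subr_gt0 q_gt0; rewrite /dH; congr arcosh.
move: p_gt0 q_gt0; rewrite /mdot /dot /hlift /sqdist /sqn /= => p_gt0 q_gt0.
by field; apply/andP; split; apply/eqP; lra.
Qed.

Lemma dH_pt_set_mem (G : set pt) q : G `<=` @disk R -> G q -> dH_pt_set q G = 0.
Proof.
move=> G_disk Gq; have hq := hlift_hyperboloid (G_disk q Gq).
rewrite /dH_pt_set (eq_imagel (f' := fun p => arcosh (- mdot (hlift q) (hlift p)))).
  rewrite (@inf_arcosh _ _ _ _ 1) //; last first.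
  - by move=> x x1; exists q => //; rewrite hq.1; lra.
  - by move=> p Gp; have := hyperboloid_mdot_le hq (hlift_hyperboloid (G_disk p Gp)); lra.
  by rewrite /arcosh expr1n subrr sqrtr0 addr0 ln1.
by move=> p Gp; rewrite dH_hlift //; apply: G_disk.
Qed.

Lemma dH_pt_set_polar N q : 0 < mdot N N -> disk q ->
  dH_pt_set q (polar N) = arcosh (polar_cosh N (hlift q)).
Proof.
move=> N_spacelike q_disk; have hq := hlift_hyperboloid q_disk.
rewrite /dH_pt_set (eq_imagel (f' := fun p => arcosh (- mdot (hlift q) (hlift p)))).
  apply: inf_arcosh; first exact: polar_cosh_ge1.
    by move=> p [p_disk pN]; apply: polar_cosh_le => //; apply: hlift_hyperboloid.
  move=> x x_gt; have [Z [hZ ZN] qZ] := polar_foot N_spacelike hq.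
  exists (hproj Z); last by rewrite hprojK // qZ; lra.
  by split; rewrite ?hprojK //; apply: hproj_disk.
by move=> p [p_disk _]; rewrite dH_hlift.
Qed.

Lemma sinh_dH_pt_set_polar N q : 0 < mdot N N -> disk q ->
  sinh (dH_pt_set q (polar N)) = `|mdot (hlift q) N| / Num.sqrt (mdot N N).
Proof.
move=> N_spacelike q_disk.
rewrite dH_pt_set_polar // sinh_arcosh ?polar_cosh_ge1 // sqr_polar_cosh //.
by rewrite addrAC subrr add0r sqrtrM ?sqr_ge0 // sqrtr_sqr sqrtrV // ltW.
Qed.

Lemma dH_set_polar N1 N2 (K : R) : 0 < mdot N1 N1 -> 0 < mdot N2 N2 -> 1 <= K ->
  K ^+ 2 * (mdot N1 N1 * mdot N2 N2) = mdot N1 N2 ^+ 2 ->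
  (forall x, K < x -> exists2 Y, hyperboloid Y /\ mdot Y N2 = 0 & polar_cosh N1 Y <= x) ->
  dH_set (polar N1) (polar N2) = arcosh K.
Proof.
move=> N1_spacelike N2_spacelike K1 KE near_K.
rewrite /dH_set (eq_imagel (f' := fun pq => arcosh (- mdot (hlift pq.1) (hlift pq.2)))).
  apply: inf_arcosh => //.
    move=> [p q] [/= [p_disk pN1] [q_disk qN2]]; rewrite mdotC.
    apply: le_trans (polar_cosh_le N1_spacelike _ _ pN1); try exact: hlift_hyperboloid.
    by apply: polar_cosh_ge KE _ qN2; rewrite ?(hlift_hyperboloid q_disk).1 //; lra.
  move=> x x_gt; have [Y [hY YN2] Yx] := near_K x x_gt.
  have [Z [hZ ZN1] YZ] := polar_foot N1_spacelike hY.
  exists (hproj Z, hproj Y); last by rewrite /= !hprojK // mdotC YZ.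
  by split; split; rewrite ?hprojK //; apply: hproj_disk.
by move=> [p q] [/= [p_disk _] [q_disk _]]; rewrite dH_hlift.
Qed.

End PoincareDisk.

Section OrthogonalCircles.
Variable R : realType.
Notation pt := (R * R)%type.
Implicit Types (c p q : pt) (rho : R).

Lemma mdot_center c rho : sqn c = 1 + rho ^+ 2 -> mdot (1, c) (1, c) = rho ^+ 2.
Proof. by rewrite /mdot /dot /sqn /= => c_orth; lra. Qed.

Lemma polar_orth_circle c rho : sqn c = 1 + rho ^+ 2 ->
  [set p | disk p /\ sqdist p c = rho ^+ 2] = polar (1, c).
Proof.
move=> c_orth; apply/seteqP; split=> p [p_disk pE]; split=> //.
  have : mdot (hlift p) (1, c) * (1 - sqn p) = 0.
    by rewrite mdot_hlift //; move: pE c_orth; rewrite /sqdist /dot /sqn; lra.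
  by move/eqP; rewrite mulf_eq0 (gt_eqF (disk_subr_gt0 p_disk)) orbF => /eqP.
have := mdot_hlift 1 c p_disk; rewrite pE mul0r.
by move: c_orth; rewrite /sqdist /dot /sqn; lra.
Qed.

Lemma sinh_dH_pt_set_orth_circle c rho q : 0 < rho -> sqn c = 1 + rho ^+ 2 -> disk q ->
  sinh (dH_pt_set q (polar (1, c))) = `|mdot (hlift q) (1, c)| / rho.
Proof.
move=> rho_gt0 c_orth q_disk; have cc := mdot_center c_orth.
rewrite sinh_dH_pt_set_polar //; last by rewrite cc exprn_gt0.
by rewrite [X in Num.sqrt X]cc sqrtr_sqr (gtr0_norm rho_gt0).
Qed.

Lemma sinh_dH_origin_orth_circle c rho : 0 < rho -> sqn c = 1 + rho ^+ 2 ->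
  sinh (dH_pt_set (0, 0) (polar (1, c))) = rho^-1.
Proof.
move=> rho_gt0 c_orth; rewrite (sinh_dH_pt_set_orth_circle rho_gt0 c_orth); last first.
  by rewrite /disk /sqn /=; lra.
by rewrite hlift0 /mdot /dot /= !mul0r !addr0 mulN1r normrN normr1 div1r.
Qed.

Lemma geodesic_origin_cases (G : set pt) : geodesic G ->
  [/\ G `<=` @disk R, G (0, 0) & sinh (dH_pt_set (0, 0) G) = 0] \/
  exists c rho, [/\ 0 < rho, sqn c = 1 + rho ^+ 2, G `<=` circle c rho, G = polar (1, c)
                  & sinh (dH_pt_set (0, 0) G) = rho^-1].
Proof.
case=> [[u [_ ->]] | [c [rho [rho_gt0 [c_orth ->]]]]].
  have G0 : disk ((0 : R), (0 : R)) /\ (0 : R) * u.2 - 0 * u.1 = 0.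
    by split; rewrite /disk /sqn /=; [lra | ring].
  by left; split=> //; [move=> p [] | rewrite dH_pt_set_mem ?sinh0 // => p []].
right; exists c, rho; split=> //; first by move=> p [].
  exact: polar_orth_circle.
by rewrite polar_orth_circle // (sinh_dH_origin_orth_circle rho_gt0 c_orth).
Qed.

Lemma inversive_distance_mdot c1 c2 rho1 rho2 :
  sqn c1 = 1 + rho1 ^+ 2 -> sqn c2 = 1 + rho2 ^+ 2 ->
  inversive_distance c1 rho1 c2 rho2 = - mdot (1, c1) (1, c2) / (rho1 * rho2).
Proof.
rewrite /inversive_distance /mdot /dot /sqdist /sqn /= => c1_orth c2_orth.
have -> : (c1.1 - c2.1) ^+ 2 + (c1.2 - c2.2) ^+ 2 - rho1 ^+ 2 - rho2 ^+ 2 =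
    2 * - (- 1 * 1 + (c1.1 * c2.1 + c1.2 * c2.2)) by lra.
by rewrite -mulrA invfM mulrACA divff ?mul1r.
Qed.

Lemma inversive_distance_ge1 c1 c2 rho1 rho2 : 0 < rho1 -> 0 < rho2 ->
  sqn c1 = 1 + rho1 ^+ 2 -> sqn c2 = 1 + rho2 ^+ 2 ->
  sqn ((c1.1 + c2.1) / 2, (c1.2 + c2.2) / 2) <= 1 ->
  1 <= inversive_distance c1 rho1 c2 rho2.
Proof.
move=> rho1_gt0 rho2_gt0 c1_orth c2_orth mid_le1.
rewrite (inversive_distance_mdot c1_orth c2_orth) ler_pdivlMr ?mulr_gt0 // mul1r.
have := sqr_ge0 (rho1 - rho2).
by move: c1_orth c2_orth mid_le1; rewrite /mdot /dot /sqn /=; nra.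
Qed.

End OrthogonalCircles.

Lemma balance_sqr_le (R : realType) (a c e : R) : 0 <= a * c -> 0 < e ->
  exists2 mu, 0 < mu & (mu * a - c / mu) ^+ 2 <= e.
Proof.
move=> ac_ge0 e_gt0; have [ac_gt0 | ac_le0] := ltrP 0 (a * c).
  have a_neq0 : a != 0 by apply: contraTneq ac_gt0 => ->; rewrite mul0r ltxx.
  have ca_gt0 : 0 < c / a.
    by rewrite (_ : c / a = a * c / a ^+ 2) ?divr_gt0 ?exprn_even_gt0 //; field.
  exists (Num.sqrt (c / a)); first by rewrite sqrtr_gt0.
  have -> : Num.sqrt (c / a) * a - c / Num.sqrt (c / a) =
      (Num.sqrt (c / a) ^+ 2 - c / a) * a / Num.sqrt (c / a).
    by field; rewrite a_neq0 gt_eqF ?sqrtr_gt0.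
  by rewrite sqr_sqrtr ?subrr ?mul0r ?expr0n //= ltW.
have : a * c == 0 by rewrite eq_le ac_le0 ac_ge0.
rewrite mulf_eq0 => /orP[/eqP-> | /eqP->].
- have c2e : 0 <= c ^+ 2 / e by rewrite divr_ge0 ?sqr_ge0 ?ltW.
  exists (1 + c ^+ 2 / e); first lra.
  rewrite mulr0 sub0r sqrrN expr_div_n ler_pdivrMr; last by rewrite exprn_gt0 //; lra.
  have : e * (1 + c ^+ 2 / e) = e + c ^+ 2 by field; exact: lt0r_neq0.
  by have := sqr_ge0 c; nra.
- exists (e / (e + a ^+ 2)); first by rewrite divr_gt0 //; have := sqr_ge0 a; lra.
  have := sqr_ge0 a; rewrite mul0r subr0 exprMn expr_div_n mulrAC => a2_ge0.
  by rewrite ler_pdivrMr ?exprn_gt0; nra.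
Qed.

Section IdealEnds.
Variable R : realType.
Variables (c : R * R) (rho : R).
Hypotheses (rho_gt0 : 0 < rho) (c_orth : sqn c = 1 + rho ^+ 2).

(* For s = 1 and s = -1, the two points where the circle (c, rho) meets the unit circle. *)
Definition ideal_end (s : R) : R * R :=
  ((c.1 - s * rho * c.2) / sqn c, (c.2 + s * rho * c.1) / sqn c).

Let sqn_c_neq0 : c.1 ^+ 2 + c.2 ^+ 2 != 0.
Proof. by rewrite -/(sqn c) c_orth gt_eqF //; have := sqr_ge0 rho; lra. Qed.

Lemma mdot_ideal_end_center s : mdot (1, ideal_end s) (1, c) = 0.
Proof. by rewrite /mdot /dot /ideal_end /sqn /=; field. Qed.

Lemma mdot_ideal_end_self s : s ^+ 2 = 1 -> mdot (1, ideal_end s) (1, ideal_end s) = 0.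
Proof.
move=> s2; rewrite /mdot /dot /ideal_end /=.
transitivity (- 1 + (1 + s ^+ 2 * rho ^+ 2) / sqn c); first by rewrite /sqn; field.
by rewrite s2 mul1r -c_orth divff ?addNr.
Qed.

Lemma mdot_ideal_ends :
  mdot (1, ideal_end 1) (1, ideal_end (-1)) = - 2 * rho ^+ 2 / sqn c.
Proof.
rewrite /mdot /dot /ideal_end /=.
transitivity (- 1 + (1 - rho ^+ 2) / sqn c); first by rewrite /sqn; field.
by rewrite -[X in - X + _](divff sqn_c_neq0) -/(sqn c) c_orth; field; rewrite -c_orth.
Qed.

(* The geodesic on the circle (c, rho), written in the null basis of its ideal ends. *)
Definition geodesic_point (mu : R) : vec R :=
  vcomb mu (1, ideal_end 1) (sqn c / (4 * rho ^+ 2) / mu) (1, ideal_end (-1)).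

Lemma geodesic_point_polar mu : 0 < mu ->
  hyperboloid (geodesic_point mu) /\ mdot (geodesic_point mu) (1, c) = 0.
Proof.
move=> mu_gt0; have sqn_c_gt0 : 0 < sqn c by rewrite c_orth; have := sqr_ge0 rho; lra.
split; last by rewrite mdot_combl !mdot_ideal_end_center !mulr0 addr0.
split; last by rewrite /= !mulr1 addr_gt0 // !divr_gt0 // mulr_gt0 // exprn_gt0.
rewrite mdot_combl !mdot_combr !mdot_ideal_end_self ?expr1n ?sqrrN ?expr1n //.
rewrite (mdotC (1, ideal_end (-1))) mdot_ideal_ends.
by field; rewrite !gt_eqF.
Qed.

End IdealEnds.

Section DistanceOrthogonalCircles.
Variable R : realType.
Variables (c1 c2 : R * R) (rho1 rho2 : R).
Hypotheses (rho1_gt0 : 0 < rho1) (rho2_gt0 : 0 < rho2).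
Hypotheses (c1_orth : sqn c1 = 1 + rho1 ^+ 2) (c2_orth : sqn c2 = 1 + rho2 ^+ 2).

Let K := inversive_distance c1 rho1 c2 rho2.

Lemma orth_circles_near x : 1 <= K -> K < x ->
  exists2 Y, hyperboloid Y /\ mdot Y (1, c2) = 0 & polar_cosh (1, c1) Y <= x.
Proof.
move=> K1 Kx; set P := sqn c2 / (4 * rho2 ^+ 2).
set a := mdot (1, ideal_end c2 rho2 1) (1, c1).
set b := mdot (1, ideal_end c2 rho2 (-1)) (1, c1).
have sqn_c2_gt0 : 0 < sqn c2 by rewrite c2_orth; have := sqr_ge0 rho2; lra.
have P_gt0 : 0 < P by rewrite divr_gt0 // mulr_gt0 // exprn_gt0.
(* On Y = geodesic_point mu, mdot Y N1 ^+ 2 = (mu a + P b / mu) ^+ 2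
   = (mu a - P b / mu) ^+ 2 + 4 P a b, where the last term is the value at distance arcosh K
   and a suitable mu makes the first one as small as needed. *)
have abK : 4 * P * (a * b) = (K ^+ 2 - 1) * rho1 ^+ 2.
  rewrite /K (inversive_distance_mdot c1_orth c2_orth) /P /a /b /ideal_end.
  move: c1_orth c2_orth sqn_c2_gt0; rewrite /mdot /dot /sqn /= => c1E c2E c2_gt0.
  have t_def : c1.1 * c2.1 + c1.2 * c2.2 = dot c1 c2 by [].
  transitivity (((dot c1 c2 - sqn c2) ^+ 2 - rho2 ^+ 2 * (sqn c1 * sqn c2 - dot c1 c2 ^+ 2))
                / (sqn c2 * rho2 ^+ 2)).
    by rewrite /sqn /dot; field; rewrite !gt_eqF.
  by rewrite t_def c1_orth c2_orth; field; rewrite !gt_eqF // addr_gt0 ?exprn_gt0.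
have ab_ge0 : 0 <= a * (P * b).
  have : 0 <= (K ^+ 2 - 1) * rho1 ^+ 2 by rewrite mulr_ge0 ?sqr_ge0 //; nra.
  by rewrite -abK; nra.
have eps_gt0 : 0 < (x ^+ 2 - K ^+ 2) * rho1 ^+ 2 by rewrite mulr_gt0 ?exprn_gt0 //; nra.
have [mu mu_gt0 balanced] := balance_sqr_le ab_ge0 eps_gt0.
have [Y_hyp Y_c2] := geodesic_point_polar rho2_gt0 c2_orth mu_gt0.
exists (geodesic_point c2 rho2 mu) => //; rewrite /polar_cosh.
have -> : mdot (geodesic_point c2 rho2 mu) (1, c1) = mu * a + P * b / mu.
  by rewrite mdot_combl mulrAC.
have -> : (mu * a + P * b / mu) ^+ 2 = (mu * a - P * b / mu) ^+ 2 + 4 * P * (a * b).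
  by field; rewrite gt_eqF.
rewrite (mdot_center c1_orth) abK -[x]ger0_norm; last lra.
rewrite -sqrtr_sqr ler_sqrt ?sqr_ge0 // -subr_ge0.
have -> : x ^+ 2 - (1 + ((mu * a - P * b / mu) ^+ 2 + (K ^+ 2 - 1) * rho1 ^+ 2) / rho1 ^+ 2)
    = ((x ^+ 2 - K ^+ 2) * rho1 ^+ 2 - (mu * a - P * b / mu) ^+ 2) / rho1 ^+ 2.
  by field; rewrite !gt_eqF.
by rewrite divr_ge0 ?sqr_ge0 // subr_ge0.
Qed.

Lemma dH_set_orth_circles : 1 <= K ->
  dH_set (polar (1, c1)) (polar (1, c2)) = arcosh K.
Proof.
move=> K1; apply: dH_set_polar => //; last by move=> x; apply: orth_circles_near.
- by rewrite (mdot_center c1_orth) exprn_gt0.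
- by rewrite (mdot_center c2_orth) exprn_gt0.
rewrite (mdot_center c1_orth) (mdot_center c2_orth) /K (inversive_distance_mdot c1_orth c2_orth).
by field; rewrite !gt_eqF.
Qed.

End DistanceOrthogonalCircles.

Section Bisector.
Variable R : realType.
Notation pt := (R * R)%type.
Implicit Types (c m p q u : pt).

Lemma diameter_origin_line (P : pt -> Prop) : diameter [set q | disk q /\ P q] ->
  P (0, 0) /\ exists2 u, u != (0, 0) & forall q, disk q -> P q -> q.1 * u.2 - q.2 * u.1 = 0.
Proof.
move=> [u [u_neq0 PE]].
have PEq q : (disk q /\ P q) = (disk q /\ q.1 * u.2 - q.2 * u.1 = 0) := congr1 (fun A => A q) PE.
split; last by exists u => // q q_disk Pq; have := conj q_disk Pq; rewrite PEq => -[].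
have : disk ((0 : R), (0 : R)) /\ (0 : R) * u.2 - 0 * u.1 = 0.
  by split; rewrite /disk /sqn /=; [lra | ring].
by rewrite -PEq => -[].
Qed.

Lemma parallel_to_independent_eq0 p q u : p.1 * q.2 - p.2 * q.1 != 0 ->
  p.1 * u.2 - p.2 * u.1 = 0 -> q.1 * u.2 - q.2 * u.1 = 0 -> u = (0, 0).
Proof.
move=> pq_neq0 pu qu.
have u1 : (p.1 * q.2 - p.2 * q.1) * u.1 = 0.
  transitivity (q.1 * (p.1 * u.2 - p.2 * u.1) - p.1 * (q.1 * u.2 - q.2 * u.1)); first ring.
  by rewrite pu qu; ring.
have u2 : (p.1 * q.2 - p.2 * q.1) * u.2 = 0.
  transitivity (q.2 * (p.1 * u.2 - p.2 * u.1) - p.2 * (q.1 * u.2 - q.2 * u.1)); first ring.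
  by rewrite pu qu; ring.
move: u1 u2 => /eqP + /eqP; rewrite !mulf_eq0 (negbTE pq_neq0) /= => /eqP u1 /eqP u2.
by case: u {pu qu} u1 u2 => /= ? ? -> ->.
Qed.

(* 1 + sqn p = 2 * dot p m is the circle centred at m orthogonal to the unit circle. *)
Lemma orth_circle_off_line m u : 1 < sqn m -> u != (0, 0) ->
  exists p, [/\ disk p, 1 + sqn p = 2 * dot p m & p.1 * u.2 - p.2 * u.1 != 0].
Proof.
move=> m_gt1 u_neq0; set M := sqn m in m_gt1 *.
have M_gt0 : 0 < M by lra.
set al := (M + 1) / (2 * M ^+ 2).
set B := (M - 1) * (3 * M + 1) / (4 * M ^+ 4).
have B_gt0 : 0 < B by rewrite divr_gt0 ?mulr_gt0 ?exprn_gt0 //; lra.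
set be := Num.sqrt B.
have be_gt0 : 0 < be by rewrite sqrtr_gt0.
have be2 : be ^+ 2 = B by rewrite sqr_sqrtr // ltW.
(* Two points of that circle with sqn p = 1 / M, symmetric about the line through 0 and m. *)
pose p (s : R) : pt := (al * m.1 - s * be * m.2, al * m.2 + s * be * m.1).
have p_circle s : s ^+ 2 = 1 -> disk (p s) /\ 1 + sqn (p s) = 2 * dot (p s) m.
  move=> s2; have sqn_p : sqn (p s) = M^-1.
    transitivity ((al ^+ 2 + s ^+ 2 * be ^+ 2) * M); first by rewrite /M /sqn /=; ring.
    by rewrite s2 mul1r be2 /al /B; field; rewrite gt_eqF.
  have dot_pm : dot (p s) m = al * M by rewrite /M /dot /sqn /=; ring.
  split; first by rewrite /disk /= sqn_p invf_lt1.
  by rewrite sqn_p dot_pm /al; field; rewrite gt_eqF.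
have p_indep : (p 1).1 * (p (-1)).2 - (p 1).2 * (p (-1)).1 != 0.
  have -> : (p 1).1 * (p (-1)).2 - (p 1).2 * (p (-1)).1 = - (2 * al * be * M).
    by rewrite /M /sqn /=; ring.
  have al_gt0 : 0 < al by rewrite divr_gt0 ?mulr_gt0 ?exprn_gt0 //; lra.
  have two_gt0 : 0 < 2 :> R by [].
  have := mulr_gt0 (mulr_gt0 (mulr_gt0 two_gt0 al_gt0) be_gt0) M_gt0.
  by rewrite oppr_eq0 => /gt_eqF ->.
have [p1_disk p1_circ] := p_circle 1 (expr1n _ _).
have [pN1_disk pN1_circ] : disk (p (-1)) /\ 1 + sqn (p (-1)) = 2 * dot (p (-1)) m.
  by apply: p_circle; rewrite sqrrN expr1n.
have [p1_off | p1_on] := eqVneq ((p 1).1 * u.2 - (p 1).2 * u.1) 0; last by exists (p 1).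
have [pN1_off | pN1_on] := eqVneq ((p (-1)).1 * u.2 - (p (-1)).2 * u.1) 0; last by exists (p (-1)).
by move: u_neq0; rewrite (parallel_to_independent_eq0 p_indep p1_off pN1_off) eqxx.
Qed.

Lemma bisector_midpoint_le1 (r1 r2 rho1 rho2 : R) c1 c2 u :
  0 < rho1 -> 0 < rho2 -> sqn c1 = 1 + rho1 ^+ 2 -> sqn c2 = 1 + rho2 ^+ 2 ->
  rho1 * r2 = rho2 * r1 -> u != (0, 0) ->
  (forall q, disk q ->
     r1 * sinh (dH_pt_set q (polar (1, c1))) = r2 * sinh (dH_pt_set q (polar (1, c2))) ->
     q.1 * u.2 - q.2 * u.1 = 0) ->
  sqn ((c1.1 + c2.1) / 2, (c1.2 + c2.2) / 2) <= 1.
Proof.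
move=> rho1_gt0 rho2_gt0 c1_orth c2_orth ratio u_neq0 bisector_on_line.
rewrite leNgt; apply/negP => /orth_circle_off_line /(_ u_neq0) [p [p_disk p_circ]].
apply/negP; rewrite negbK; apply/eqP/bisector_on_line => //.
rewrite (sinh_dH_pt_set_orth_circle rho1_gt0 c1_orth p_disk).
rewrite (sinh_dH_pt_set_orth_circle rho2_gt0 c2_orth p_disk).
have -> : mdot (hlift p) (1, c1) = - mdot (hlift p) (1, c2).
  apply: (@mulIf _ (1 - sqn p)); first by rewrite gt_eqF ?disk_subr_gt0.
  rewrite mulNr !mdot_hlift //; move: p_circ; rewrite /dot /=; lra.
rewrite normrN; set b := `|_|.
transitivity (rho2 * r1 * b / (rho1 * rho2)); first by field; rewrite !gt_eqF.
by rewrite -ratio; field; rewrite !gt_eqF.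
Qed.
End Bisector.

Theorem lemma4p8 (R : realType) (r1 r2 : R) (g1 g2 : set (R * R)) :
  0 < r1 -> 0 < r2 ->
  geodesic g1 -> geodesic g2 -> g1 `&` g2 = set0 ->
  diameter [set q | disk q /\
              r1 * sinh (dH_pt_set q g1) = r2 * sinh (dH_pt_set q g2)] ->
  exists (c1 c2 : R * R) (rho1 rho2 : R),
    0 < rho1 /\ 0 < rho2 /\
    (g1 `<=` circle c1 rho1) /\ (g2 `<=` circle c2 rho2) /\
    rho1 * r2 = rho2 * r1 /\
    inversive_distance c1 rho1 c2 rho2 = cosh (dH_set g1 g2).
Proof.
move=> r1_gt0 r2_gt0 g1_geod g2_geod g12_disj.
move=> /diameter_origin_line [origin_bisector [u u_neq0 bisector_on_line]].
case: (geodesic_origin_cases g1_geod)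
  => [[g1_disk g1_0 sh1] | [c1 [rho1 [rho1_gt0 c1_orth g1_circ g1E sh1]]]];
case: (geodesic_origin_cases g2_geod)
  => [[g2_disk g2_0 sh2] | [c2 [rho2 [rho2_gt0 c2_orth g2_circ g2E sh2]]]].
- by have : (g1 `&` g2) (0, 0) by []; rewrite g12_disj.
- by move: origin_bisector; rewrite sh1 sh2 mulr0 => /esym/eqP; rewrite mulf_eq0 invr_eq0 !gt_eqF.
- by move: origin_bisector; rewrite sh1 sh2 mulr0 => /eqP; rewrite mulf_eq0 invr_eq0 !gt_eqF.
have ratio : rho1 * r2 = rho2 * r1.
  move/eqP: origin_bisector; rewrite sh1 sh2 eqr_div ?lt0r_neq0 // => /eqP ratio.
  by rewrite mulrC [RHS]mulrC ratio.
have K1 : 1 <= inversive_distance c1 rho1 c2 rho2.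
  apply: inversive_distance_ge1 => //.
  apply: (bisector_midpoint_le1 rho1_gt0 rho2_gt0 c1_orth c2_orth ratio u_neq0).
  by rewrite -g1E -g2E.
exists c1, c2, rho1, rho2; do 5!split => //.
by rewrite g1E g2E (dH_set_orth_circles rho1_gt0 rho2_gt0 c1_orth c2_orth K1) cosh_arcosh.
Qed.
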